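(* Let $\gamma\in\mathbb{R}$, $\lambda>0$, $\Delta>0$, let $\nu$ be a finite measure on $\mathbb{R}$ with $\nu(\mathbb{R})=\lambda$, $F:=\nu/\lambda$, and let $P$ and $\mathcal{F}^{-1}[\varphi^{-1}(-\cdot)]$ be as in the context. Let $f_1,f_2$ be bounded functions. Then $$\int_{\mathbb{R}}\big(f_1*\mathcal{F}^{-1}[\varphi^{-1}(-\cdot)](x)\big)\big(f_2*\mathcal{F}^{-1}[\varphi^{-1}(-\cdot)](x)\big)P(dx)$$ $$=f_1(0)f_2(0)+\Delta\Big(\int_{\mathbb{R}}f_1f_2\,d\nu-f_1(0)\,(f_2*\bar\nu)(0)-f_2(0)\,(f_1*\bar\nu)(0)+\lambda f_1(0)f_2(0)\Big)+O((\lambda\Delta)^2).$$ In particular, if $f_1(0)=f_2(0)=0$, the left-hand side equals $\lambda\Delta\int_{\mathbb{R}}f_1(x)f_2(x)F(dx)+O((\lambda\Delta)^2)$.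
   Context: $\bar\nu(A):=\nu(-A)$ for Borel $A$, $\nu^{*k}$ and $\bar\nu^{*k}$ are $k$-fold convolutions with $\nu^{*0}=\bar\nu^{*0}=\delta_0$. $P:=e^{-\lambda\Delta}\delta_{\gamma\Delta}*\sum_{k\ge0}\nu^{*k}\Delta^k/k!$ (the law of $X_\Delta$ for the compound Poisson process with drift $\gamma$, intensity $\lambda$ and jump law $F$), $\varphi=\mathcal{F}P$ with $\mathcal{F}\mu(u)=\int e^{iux}\mu(dx)$, i.e. $\varphi(u)=\exp(\Delta(i\gamma u+\mathcal{F}\nu(u)-\lambda))$, and $\mathcal{F}^{-1}[\varphi^{-1}(-\cdot)]:=e^{\lambda\Delta}\delta_{\gamma\Delta}*\sum_{k\ge0}\bar\nu^{*k}(-\Delta)^k/k!$, a finite signed measure whose Fourier transform is $u\mapsto1/\varphi(-u)$. For a bounded function $f$ and finite (signed) measure $\mu$, $f*\mu(x):=\int f(x-y)\mu(dy)$. *)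

From HB Require Import structures.
From mathcomp Require Import all_boot all_order all_algebra.
From mathcomp Require Import all_classical all_reals all_analysis.
Set Implicit Arguments. Unset Strict Implicit. Unset Printing Implicit Defensive.
Import Order.TTheory GRing.Theory Num.Theory.
Import numFieldNormedType.Exports.
Local Open Scope classical_set_scope.
Local Open Scope ring_scope.

Section defs.
Variable R : realType.

(* [convpow nu k g] = \int g d(nu^{*k}), the integral of g against the k-fold
   convolution power of nu (nu^{*0} = delta_0), unfolded as an iterated
   integral:  \int g d nu^{*(k+1)} = \int nu(dy) \int g(y + s) nu^{*k}(ds). *)
Fixpoint convpow (nu : {measure set R -> \bar R}) (k : nat) (g : R -> R) : R :=
  match k with
  | 0%N => g 0
  | k'.+1 => \int[nu]_y convpow nu k' (fun s => g (y + s))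
  end.

(* \int g d(nubar^{*k}), where nubar(A) = nu(-A). *)
Definition convpow_bar (nu : {measure set R -> \bar R}) (k : nat) (g : R -> R) : R :=
  convpow nu k (fun s => g (- s)).

Definition rseries (a : nat -> R) : R := limn (series a).

(* \int h dP, P = e^{-lam Del} delta_{gam Del} * sum_k nu^{*k} Del^k/k!  *)
Definition P_int (gam lam Del : R) (nu : {measure set R -> \bar R}) (h : R -> R) : R :=
  expR (- (lam * Del)) *
  rseries (fun k => Del ^+ k / (k`!)%:R * convpow nu k (fun s => h (gam * Del + s))).

(* \int h dG, G = F^{-1}[phi^{-1}(-.)]
     = e^{lam Del} delta_{gam Del} * sum_k nubar^{*k} (-Del)^k/k!  *)
Definition Ginv_int (gam lam Del : R) (nu : {measure set R -> \bar R}) (h : R -> R) : R :=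
  expR (lam * Del) *
  rseries (fun k => (- Del) ^+ k / (k`!)%:R * convpow_bar nu k (fun s => h (gam * Del + s))).

(* f * mu (x) = \int f(x - y) mu(dy), the (signed) measure mu being given
   through its integration functional [I]. *)
Definition fconv (f : R -> R) (I : (R -> R) -> R) (x : R) : R :=
  I (fun y => f (x - y)).


End defs.

From HB Require Import structures.
From mathcomp Require Import all_boot all_order all_algebra.
From mathcomp Require Import all_classical all_reals all_analysis.
From mathcomp Require Import measurable_realfun.
From mathcomp Require Import ring lra.
Set Implicit Arguments.
Unset Strict Implicit.
Unset Printing Implicit Defensive.
Import Order.TTheory GRing.Theory Num.Theory.
Import numFieldNormedType.Exports.
Local Open Scope classical_set_scope.
Local Open Scope ring_scope.

(* With x = lam Del and c = gam Del, both [P] and [F^{-1}[phi^{-1}(-.)]] are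
   exponential series e^{-/+x} sum_k (+/-Del)^k/k! nu^{*k} shifted by c; for a
   function bounded by M the k-th term is at most M x^k/k!, so cutting such a
   series after its k-th term costs O(x^(k+1)).  Cutting P after k = 1 reduces
   the left-hand side to e^{-x} (G1 G2 (c) + Del \int G1 G2 (c + y) nu(dy)),
   where G_i = f_i * F^{-1}[phi^{-1}(-.)].  At c, G_i = e^x (f_i(0) - Del \int f_i
   dnu) + O(x^2), while at c + y, G_i = e^x f_i(y) + O(x); multiplying out and
   expanding e^x = 1 + x + O(x^2) leaves the stated first-order terms.  As
   x <= 1, every error is at most a fixed polynomial in e times
   sup|f1| sup|f2| x^2. *)

Section norm_bounds.
Variable R : realDomainType.
Implicit Types a b A B : R.

Lemma norm_mul_le a b A B : `|a| <= A -> `|b| <= B -> `|a * b| <= A * B.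
Proof. by move=> aA bB; rewrite normrM ler_pM. Qed.

Lemma norm_mul_sub_mul_le a a' b b' A B A' B' :
  `|a - a'| <= A -> `|b| <= B -> `|a'| <= A' -> `|b - b'| <= B' ->
  `|a * b - a' * b'| <= A * B + A' * B'.
Proof.
move=> aA bB aA' bB'.
have -> : a * b - a' * b' = (a - a') * b + a' * (b - b') by ring.
by apply: le_trans (ler_normD _ _) _; rewrite lerD// norm_mul_le.
Qed.

End norm_bounds.

Lemma first_order_expansion_le (R : realFieldType) (e x lam Del u1 u2 J1 J2 I M1 M2 : R) :
  x = lam * Del -> 0 <= e ->
  `|e - 1| <= x * e -> `|e - (1 + x)| <= x ^+ 2 * e ->
  `|u1| <= M1 -> `|u2| <= M2 ->
  `|Del * J1| <= M1 * x -> `|Del * J2| <= M2 * x -> `|Del * I| <= M1 * M2 * x ->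
  `|e * ((u1 - Del * J1) * (u2 - Del * J2) + Del * I)
    - (u1 * u2 + Del * (I - u1 * J2 - u2 * J1 + lam * u1 * u2))|
  <= 5 * e * M1 * M2 * x ^+ 2.
Proof.
move=> xE e0 e1 e2 u1M u2M J1M J2M IM.
have -> : e * ((u1 - Del * J1) * (u2 - Del * J2) + Del * I)
    - (u1 * u2 + Del * (I - u1 * J2 - u2 * J1 + lam * u1 * u2)) =
  (e - (1 + x)) * (u1 * u2) - (e - 1) * (u1 * (Del * J2) + u2 * (Del * J1))
  + e * ((Del * J1) * (Del * J2)) + (e - 1) * (Del * I) by rewrite xE; ring.
have t1 := norm_mul_le e2 (norm_mul_le u1M u2M).
have t2 := norm_mul_le e1 (le_trans (ler_normD _ _)
  (lerD (norm_mul_le u1M J2M) (norm_mul_le u2M J1M))).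
have eE : `|e| <= e by rewrite ger0_norm.
have t3 := norm_mul_le eE (norm_mul_le J1M J2M).
have t4 := norm_mul_le e1 IM.
have := ler_normD ((e - (1 + x)) * (u1 * u2) - (e - 1) * (u1 * (Del * J2) + u2 * (Del * J1))
  + e * ((Del * J1) * (Del * J2))) ((e - 1) * (Del * I)).
have := ler_normD ((e - (1 + x)) * (u1 * u2) - (e - 1) * (u1 * (Del * J2) + u2 * (Del * J1)))
  (e * ((Del * J1) * (Del * J2))).
have := ler_normB ((e - (1 + x)) * (u1 * u2)) ((e - 1) * (u1 * (Del * J2) + u2 * (Del * J1))).
rewrite expr2 in t1 *; lra.
Qed.

Section exponentially_dominated_series.
Variable R : realType.

Lemma exp_coeff_le_shift (x : R) m k : 0 <= x -> (m <= k)%N ->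
  exp_coeff x k <= x ^+ m * exp_coeff x (k - m)%N.
Proof.
move=> x0 mk; rewrite /exp_coeff /= -{1}(subnKC mk) exprD -mulrA.
rewrite ler_wpM2l ?exprn_ge0// ler_wpM2l ?exprn_ge0//.
by rewrite lef_pV2 ?posrE ?ltr0n ?fact_gt0// ler_nat leq_fact// leq_subr.
Qed.

Lemma series_exp_coeff_le_expR (x : R) n : 0 <= x -> series (exp_coeff x) n <= expR x.
Proof.
move=> x0; apply: (nondecreasing_cvgn_le _ (is_cvg_series_exp_coeff x)).
by apply: nondecreasing_series => k _ _; exact: exp_coeff_ge0.
Qed.

Lemma series_1 (a : nat -> R) : series a 1 = a 0%N.
Proof. by rewrite /series /= big_nat1. Qed.

Lemma series_2 (a : nat -> R) : series a 2 = a 0%N + a 1%N.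
Proof. by rewrite seriesSr series_1. Qed.

Variables (a : nat -> R) (B x : R).
Hypotheses (x_ge0 : 0 <= x) (a_le : forall k, `|a k| <= B * exp_coeff x k).

Lemma norm_series_sub_le m n : (m <= n)%N ->
  `|series a n - series a m| <= B * x ^+ m * expR x.
Proof.
move=> mn; rewrite sub_series_geq//.
have B0 : 0 <= B.
  by have := a_le 0%N; rewrite /exp_coeff /= expr0 divr1 mulr1; apply: le_trans.
apply: (le_trans (ler_norm_sum _ _ _)).
apply: (@le_trans _ _ (\sum_(m <= k < n) B * (x ^+ m * exp_coeff x (k - m)%N))).
  apply: ler_sum_nat => k /andP[mk _].
  by apply: le_trans (a_le k) _; rewrite ler_wpM2l// exp_coeff_le_shift.
rewrite -big_distrr -big_distrr /= -mulrA ler_wpM2l// ler_wpM2l ?exprn_ge0//.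
rewrite -{1}(add0n m) big_addn.
under eq_bigr do rewrite addnK.
exact: series_exp_coeff_le_expR.
Qed.

Lemma is_cvg_series_exp_dominated : cvgn (series a).
Proof.
apply: normed_cvg.
apply: (@series_le_cvg _ _ (fun k => B * exp_coeff x k)).
- by move=> n; exact: normr_ge0.
- by move=> n; exact: le_trans (normr_ge0 _) (a_le n).
- exact: a_le.
- exact: (@is_cvg_seriesZ _ _ B (is_cvg_series_exp_coeff x)).
Qed.

Lemma norm_rseries_sub_series_le m :
  `|rseries a - series a m| <= B * x ^+ m * expR x.
Proof.
have tail : \forall n \near \oo, `|series a n - series a m| <= B * x ^+ m * expR x.
  by near=> n; apply: norm_series_sub_le; near: n; exists m.
rewrite ler_distl; apply/andP; split.
- apply: limr_ge; first exact: is_cvg_series_exp_dominated.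
  by apply: filterS tail => n; rewrite ler_distl => /andP[].
- apply: limr_le; first exact: is_cvg_series_exp_dominated.
  by apply: filterS tail => n; rewrite ler_distl => /andP[].
Unshelve. all: by end_near.
Qed.

End exponentially_dominated_series.

Lemma expR_Taylor_le (R : realType) (x : R) : 0 <= x ->
  `|expR x - 1| <= x * expR x /\ `|expR x - (1 + x)| <= x ^+ 2 * expR x.
Proof.
move=> x0.
have dom k : `|exp_coeff x k| <= 1 * exp_coeff x k.
  by rewrite mul1r ger0_norm// exp_coeff_ge0.
have c0 : exp_coeff x 0 = 1 by rewrite /exp_coeff /= expr0 divr1.
have c1 : exp_coeff x 1 = x by rewrite /exp_coeff /= expr1 divr1.
split.
- by have := norm_rseries_sub_series_le x0 dom 1; rewrite series_1 c0 mul1r expr1.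
- by have := norm_rseries_sub_series_le x0 dom 2; rewrite series_2 c0 c1 mul1r.
Qed.

Section finite_measure.
Variables (R : realType) (nu : {measure set R -> \bar R}) (lam : R).
Hypothesis nuT : nu setT = lam%:E.

Lemma mass_ge0 : 0 <= lam.
Proof. by rewrite -lee_fin -nuT measure_ge0. Qed.

Lemma fin_num_fun_nu : fin_num_fun nu.
Proof.
move=> U mU; rewrite ge0_fin_numE//.
by rewrite (@le_lt_trans _ _ (nu setT)) ?le_measure ?inE// nuT ltry.
Qed.

(* Tonelli's measurability lemma needs [nu] as a finite measure instance. *)
Let nu_finite : set R -> \bar R := nu.
HB.instance Definition _ := Measure.on nu_finite.
HB.instance Definition _ := Measure_isFinite.Build _ _ _ nu_finite fin_num_fun_nu.

Lemma integrable_bounded (g : R -> R) M : measurable_fun setT g ->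
  (forall y, `|g y| <= M) -> nu.-integrable setT (EFin \o g).
Proof.
move=> mg gM; apply: measurable_bounded_integrable; rewrite ?nuT ?ltry//.
exists M; split; first by rewrite num_real.
by move=> M' MM' y _ /=; exact: le_trans (gM y) (ltW MM').
Qed.

Lemma norm_Rintegral_le (g : R -> R) M : measurable_fun setT g ->
  (forall y, `|g y| <= M) -> `|\int[nu]_y g y| <= M * lam.
Proof.
move=> mg gM; have M0 : 0 <= M by exact: le_trans (normr_ge0 _) (gM 0).
apply: le_trans (le_normr_Rintegral _ (integrable_bounded mg gM)) _ => //.
apply: (@le_trans _ _ (\int[nu]_y M)); last by rewrite Rintegral_cst// nuT.
apply: le_Rintegral => //.
- exact: integrable_norm (integrable_bounded mg gM).
- by apply: (@integrable_bounded _ M) => // y; rewrite ger0_norm.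
Qed.

Lemma norm_scale_Rintegral_le Del (g : R -> R) M : 0 <= Del ->
  measurable_fun setT g -> (forall y, `|g y| <= M) ->
  `|Del * \int[nu]_y g y| <= M * (lam * Del).
Proof.
move=> Del0 mg gM; rewrite normrM ger0_norm// mulrC mulrA.
by rewrite ler_wpM2r// norm_Rintegral_le.
Qed.

(* Shifting by [M] makes the integrand nonnegative, so that Tonelli applies. *)
Lemma measurable_Rintegral_param d (T : measurableType d) (F : T * R -> R) M :
  measurable_fun setT F -> (forall p, `|F p| <= M) ->
  measurable_fun setT (fun t => \int[nu]_y F (t, y)).
Proof.
move=> mF FM.
have FM_ge0 p : (0 <= (F p + M)%:E)%E.
  by have := FM p; rewrite lee_fin ler_norml -lerBlDr sub0r => /andP[].
have shiftE : (fun t => \int[nu]_y F (t, y)) =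
    (fun t => fine (\int[nu]_y (F (t, y) + M)%:E)%E - M * lam).
  apply/funext => t.
  have M0 : 0 <= M by exact: le_trans (normr_ge0 _) (FM (t, 0)).
  have mFt : measurable_fun setT (fun y => F (t, y)) by exact: measurable_fun_pair2.
  rewrite -[fine _]/(\int[nu]_y (F (t, y) + M)) RintegralD ?Rintegral_cst ?nuT ?addrK//.
  - exact: integrable_bounded mFt (fun y => FM (t, y)).
  - by apply: (@integrable_bounded _ M) => // y; rewrite ger0_norm.
rewrite shiftE; apply: measurable_funB => //.
apply: measurableT_comp; first exact: fine_measurable.
apply: (@measurable_fun_fubini_tonelli_F _ _ T R R nu_finite (fun p => (F p + M)%:E)) => //.
by apply/measurable_EFinP; exact: measurable_funD.
Qed.

Lemma convpow_param_measurable_le k d (T : measurableType d) (F : T * R -> R) M :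
  measurable_fun setT F -> (forall p, `|F p| <= M) ->
  measurable_fun setT (fun t => convpow nu k (fun s => F (t, s))) /\
  (forall t, `|convpow nu k (fun s => F (t, s))| <= lam ^+ k * M).
Proof.
elim: k d T F M => [|k IH] d T F M mF FM.
  split=> [|t]; first exact: measurable_fun_pair1.
  by rewrite expr0 mul1r; exact: FM.
pose G (q : (T * R) * R) := F (q.1.1, q.1.2 + q.2).
have mG : measurable_fun setT G.
  apply: measurableT_comp => //; apply: measurable_fun_pair => /=.
    exact: measurableT_comp.
  by apply: measurable_funD => //; exact: measurableT_comp.
have [mH HM] := IH _ _ G M mG (fun q => FM _).
split; first exact: measurable_Rintegral_param mH HM.
move=> t /=; rewrite exprS -mulrA mulrC.
apply: norm_Rintegral_le => [|y]; last exact: (HM (t, y)).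
exact: (measurable_fun_pair2 (f := fun q => convpow nu k (fun s => G (q, s))) _ mH).
Qed.

Lemma norm_convpow_le k (g : R -> R) M : measurable_fun setT g ->
  (forall s, `|g s| <= M) -> `|convpow nu k g| <= lam ^+ k * M.
Proof.
move=> mg gM.
have [_ /(_ 0)//] := convpow_param_measurable_le k (measurableT_comp mg measurable_snd)
  (fun p : R * R => gM p.2).
Qed.

Lemma norm_P_int_sub_le gam Del (h : R -> R) B : 0 <= Del ->
  measurable_fun setT h -> (forall z, `|h z| <= B) ->
  `|P_int gam lam Del nu h -
    expR (- (lam * Del)) * (h (gam * Del) + Del * \int[nu]_y h (gam * Del + y))|
  <= B * (lam * Del) ^+ 2.
Proof.
move=> Del0 mh hB; set x := lam * Del; set c := gam * Del.
have x0 : 0 <= x by rewrite mulr_ge0// mass_ge0.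
pose b k := Del ^+ k / (k`!)%:R * convpow nu k (fun s => h (c + s)).
have b_le k : `|b k| <= B * exp_coeff x k.
  have mhc : measurable_fun setT (fun s => h (c + s)).
    by apply: measurableT_comp mh _; exact: measurable_funD.
  rewrite normrM ger0_norm ?divr_ge0 ?exprn_ge0//.
  apply: le_trans (ler_wpM2l _ (norm_convpow_le k mhc (fun s => hB _))) _.
    by rewrite divr_ge0 ?exprn_ge0.
  by rewrite /exp_coeff /= /x exprMn; lra.
have b01 : series b 2 = h c + Del * \int[nu]_y h (c + y).
  rewrite series_2 /b expr0 expr1 fact0 divr1 mul1r /=.
  rewrite (_ : (1`!)%:R = 1 :> R)// divr1 addr0; congr (_ + _ * _).
  by apply: eq_Rintegral => y _; rewrite addr0.
rewrite /P_int -/x -/c -b01 -mulrBr normrM ger0_norm ?expR_ge0//.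
apply: le_trans (ler_wpM2l (expR_ge0 _) (norm_rseries_sub_series_le x0 b_le 2)) _.
by rewrite expRN mulrC mulfK ?gt_eqF ?expR_gt0.
Qed.

End finite_measure.

Section Ginv_convolution.
Variables (R : realType) (nu : {measure set R -> \bar R}) (lam gam Del : R).
Variables (f : R -> R) (M : R).
Hypotheses (nuT : nu setT = lam%:E) (Del_ge0 : 0 <= Del).
Hypotheses (mf : measurable_fun setT f) (fM : forall y, `|f y| <= M).

Let x := lam * Del.
Let G := fconv f (Ginv_int gam lam Del nu).

Let x_ge0 : 0 <= x. Proof. by rewrite mulr_ge0// (mass_ge0 nuT). Qed.

Definition Ginv_coef (z : R) (k : nat) : R :=
  (- Del) ^+ k / (k`!)%:R * convpow_bar nu k (fun s => f (z - (gam * Del + s))).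

Let mf_shift : measurable_fun setT (fun p : R * R => f (p.1 - (gam * Del + - p.2))).
Proof.
apply: measurableT_comp mf _; apply: measurable_funB => //.
by apply: measurable_funD => //; exact: measurableT_comp.
Qed.

Lemma Ginv_coef_le z k : `|Ginv_coef z k| <= M * exp_coeff x k.
Proof.
have [_ /(_ z) convM] := convpow_param_measurable_le nuT k mf_shift (fun p => fM _).
rewrite normrM normrM normrX normrN (ger0_norm Del_ge0).
rewrite (ger0_norm (_ : 0 <= (k`!)%:R^-1)) ?invr_ge0//.
apply: le_trans (ler_wpM2l _ convM) _; first by rewrite divr_ge0 ?exprn_ge0.
by rewrite /exp_coeff /= /x exprMn; lra.
Qed.

Lemma norm_fconv_Ginv_int_sub_le z m :
  `|G z - expR x * series (Ginv_coef z) m| <= M * x ^+ m * expR x ^+ 2.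
Proof.
rewrite /G /fconv /Ginv_int -/x -mulrBr normrM ger0_norm ?expR_ge0//.
apply: le_trans (ler_wpM2l (expR_ge0 _) (norm_rseries_sub_series_le x_ge0 (Ginv_coef_le z) m)) _.
by rewrite expr2; lra.
Qed.

Lemma norm_fconv_Ginv_int_le z : `|G z| <= M * expR x ^+ 2.
Proof.
have := norm_fconv_Ginv_int_sub_le z 0.
by rewrite /series /= big_geq// mulr0 subr0 expr0 mulr1.
Qed.

Lemma fconv_Ginv_int_shift_le y : `|G (gam * Del + y) - expR x * f y| <= M * x * expR x ^+ 2.
Proof.
have := norm_fconv_Ginv_int_sub_le (gam * Del + y) 1.
by rewrite series_1 /Ginv_coef expr0 fact0 divr1 mul1r /convpow_bar /= oppr0 addr0
  addrAC subrr add0r expr1.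
Qed.

Lemma fconv_Ginv_int_at_drift_le :
  `|G (gam * Del) - expR x * (f 0 - Del * \int[nu]_y f y)| <= M * x ^+ 2 * expR x ^+ 2.
Proof.
have intE : \int[nu]_y f (gam * Del - (gam * Del - (y + 0))) = \int[nu]_y f y.
  by apply: eq_Rintegral => y _; rewrite addr0 opprB addrC subrK.
have := norm_fconv_Ginv_int_sub_le (gam * Del) 2.
rewrite series_2 /Ginv_coef expr0 fact0 divr1 mul1r expr1 (_ : (1`!)%:R = 1 :> R)// divr1.
by rewrite /convpow_bar /= oppr0 addr0 subrr mulNr intE.
Qed.

Lemma measurable_fconv_Ginv_int : measurable_fun setT G.
Proof.
apply: measurable_funM => //.
apply: (@measurable_fun_cvg _ _ _ _ (fun n z => series (Ginv_coef z) n)); last first.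
  by move=> z _; exact: is_cvg_series_exp_dominated (Ginv_coef_le z).
move=> n; apply: measurable_sum => k; apply: measurable_funM => //.
by have [] := convpow_param_measurable_le nuT k mf_shift (fun p => fM _).
Qed.

End Ginv_convolution.

Section second_moment_expansion.
Variables (R : realType) (nu : {measure set R -> \bar R}) (gam lam Del : R).
Variables (f1 f2 : R -> R) (M1 M2 : R).
Hypotheses (nuT : nu setT = lam%:E) (Del_ge0 : 0 <= Del) (x_le1 : lam * Del <= 1).
Hypotheses (mf1 : measurable_fun setT f1) (mf2 : measurable_fun setT f2).
Hypotheses (f1M : forall y, `|f1 y| <= M1) (f2M : forall y, `|f2 y| <= M2).

Let x := lam * Del.
Let e := expR x.
Let G1 := fconv f1 (Ginv_int gam lam Del nu).
Let G2 := fconv f2 (Ginv_int gam lam Del nu).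
Let J1 := \int[nu]_y f1 y.
Let J2 := \int[nu]_y f2 y.
Let I12 := \int[nu]_y (f1 y * f2 y).

Let x_ge0 : 0 <= x. Proof. by rewrite mulr_ge0// (mass_ge0 nuT). Qed.
Let e_ge1 : 1 <= e. Proof. by rewrite /e -expR0 ler_expR. Qed.
Let M1_ge0 : 0 <= M1. Proof. exact: le_trans (normr_ge0 _) (f1M 0). Qed.

Let mf12 : measurable_fun setT (fun y => f1 y * f2 y).
Proof. exact: measurable_funM. Qed.
Let f12M y : `|f1 y * f2 y| <= M1 * M2. Proof. exact: norm_mul_le. Qed.
Let mG1 := measurable_fconv_Ginv_int gam nuT Del_ge0 mf1 f1M.
Let mG2 := measurable_fconv_Ginv_int gam nuT Del_ge0 mf2 f2M.
Let G1M : forall z, `|G1 z| <= M1 * e ^+ 2 := norm_fconv_Ginv_int_le gam nuT Del_ge0 mf1 f1M.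
Let G2M : forall z, `|G2 z| <= M2 * e ^+ 2 := norm_fconv_Ginv_int_le gam nuT Del_ge0 mf2 f2M.
Let DJ1 : `|Del * J1| <= M1 * x := norm_scale_Rintegral_le nuT Del_ge0 mf1 f1M.
Let DJ2 : `|Del * J2| <= M2 * x := norm_scale_Rintegral_le nuT Del_ge0 mf2 f2M.
Let DI12 : `|Del * I12| <= M1 * M2 * x := norm_scale_Rintegral_le nuT Del_ge0 mf12 f12M.

Lemma fconv_Ginv_int_product_at_drift_le :
  `|G1 (gam * Del) * G2 (gam * Del)
    - e ^+ 2 * ((f1 0 - Del * J1) * (f2 0 - Del * J2))|
  <= (e ^+ 4 + 2 * e ^+ 3) * M1 * M2 * x ^+ 2.
Proof.
have a1 : `|e * (f1 0 - Del * J1)| <= e * (2 * M1).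
  rewrite normrM ger0_norm ?expR_ge0// ler_wpM2l ?expR_ge0//.
  have := ler_normB (f1 0) (Del * J1); have := f1M 0; have := DJ1.
  have : M1 * x <= M1 by rewrite ler_piMr.
  lra.
rewrite (_ : e ^+ 2 * _ = e * (f1 0 - Del * J1) * (e * (f2 0 - Del * J2))); last by ring.
apply: le_trans (norm_mul_sub_mul_le
  (fconv_Ginv_int_at_drift_le gam nuT Del_ge0 mf1 f1M) (G2M _) a1
  (fconv_Ginv_int_at_drift_le gam nuT Del_ge0 mf2 f2M)) _.
rewrite -/x -/e; lra.
Qed.

Lemma fconv_Ginv_int_product_along_jumps_le :
  `|Del * \int[nu]_y (G1 (gam * Del + y) * G2 (gam * Del + y)) - Del * (e ^+ 2 * I12)|
  <= (e ^+ 4 + e ^+ 3) * M1 * M2 * x ^+ 2.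
Proof.
have shift (G : R -> R) : measurable_fun setT G -> measurable_fun setT (fun y => G (gam * Del + y)).
  by move=> mG; apply: measurableT_comp mG _; exact: measurable_funD.
have mH : measurable_fun setT (fun y => G1 (gam * Del + y) * G2 (gam * Del + y)).
  by apply: measurable_funM; exact: shift.
have mF : measurable_fun setT (fun y => e ^+ 2 * (f1 y * f2 y)) by exact: measurable_funM.
have HM y : `|G1 (gam * Del + y) * G2 (gam * Del + y)| <= M1 * e ^+ 2 * (M2 * e ^+ 2).
  exact: norm_mul_le.
have FM y : `|e ^+ 2 * (f1 y * f2 y)| <= e ^+ 2 * (M1 * M2).
  by apply: norm_mul_le; [rewrite ger0_norm ?exprn_ge0 ?expR_ge0 | exact: f12M].
have eF1 y : `|e * f1 y| <= e * M1.
  by rewrite normrM ger0_norm ?expR_ge0// ler_wpM2l ?expR_ge0.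
rewrite /I12 -mulrBr -RintegralZl ?(integrable_bounded nuT mf12 f12M)//.
rewrite -RintegralB ?(integrable_bounded nuT mH HM) ?(integrable_bounded nuT mF FM)//.
rewrite (_ : _ * x ^+ 2 = (e ^+ 4 + e ^+ 3) * M1 * M2 * x * (lam * Del)); last first.
  by rewrite expr2 mulrA.
apply: (norm_scale_Rintegral_le nuT) => // [|y]; first exact: measurable_funB.
rewrite (_ : e ^+ 2 * _ = e * f1 y * (e * f2 y)); last by ring.
apply: le_trans (norm_mul_sub_mul_le
  (fconv_Ginv_int_shift_le gam nuT Del_ge0 mf1 f1M y) (G2M _) (eF1 y)
  (fconv_Ginv_int_shift_le gam nuT Del_ge0 mf2 f2M y)) _.
rewrite -/x -/e; lra.
Qed.

Lemma P_int_fconv_Ginv_int_expansion_le :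
  `|P_int gam lam Del nu (fun z => G1 z * G2 z)
    - (f1 0 * f2 0 + Del * (I12 - f1 0 * J2 - f2 0 * J1 + lam * f1 0 * f2 0))|
  <= (3 * e ^+ 4 + 3 * e ^+ 3 + 5 * e) * M1 * M2 * x ^+ 2.
Proof.
have [e_sub1 e_sub1Dx] := expR_Taylor_le x_ge0.
have HM z : `|G1 z * G2 z| <= M1 * e ^+ 2 * (M2 * e ^+ 2) by exact: norm_mul_le.
have mH : measurable_fun setT (fun z => G1 z * G2 z) by exact: measurable_funM.
have P_le := norm_P_int_sub_le nuT gam Del_ge0 mH HM.
have drift_le := fconv_Ginv_int_product_at_drift_le.
have jumps_le := fconv_Ginv_int_product_along_jumps_le.
have first_le := first_order_expansion_le (erefl x) (expR_ge0 x) e_sub1 e_sub1Dx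
  (f1M 0) (f2M 0) DJ1 DJ2 DI12.
rewrite expRN -/x -/e in P_le; rewrite -/e in first_le.
set H := P_int _ _ _ _ _ in P_le *.
set Hc := G1 (gam * Del) * G2 (gam * Del) in P_le drift_le.
set K := Del * \int[nu]_y _ in P_le jumps_le.
set a := (f1 0 - Del * J1) * (f2 0 - Del * J2) in drift_le first_le.
set target := f1 0 * f2 0 + _.
have -> : H - target = (H - e^-1 * (Hc + K))
    + e^-1 * ((Hc - e ^+ 2 * a) + (K - Del * (e ^+ 2 * I12)))
    + (e * (a + Del * I12) - target).
  by field; rewrite gt_eqF ?expR_gt0.
have inv_le b : `|e^-1 * b| <= `|b|.
  by rewrite normrM ger0_norm ?invr_ge0 ?expR_ge0// ler_piMl ?invf_le1 ?expR_gt0.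
have := le_trans (inv_le _) (ler_normD (Hc - e ^+ 2 * a) (K - Del * (e ^+ 2 * I12))).
have := ler_normD (H - e^-1 * (Hc + K)) (e^-1 * ((Hc - e ^+ 2 * a) + (K - Del * (e ^+ 2 * I12)))).
have := ler_normD (H - e^-1 * (Hc + K) + e^-1 * ((Hc - e ^+ 2 * a) + (K - Del * (e ^+ 2 * I12))))
  (e * (a + Del * I12) - target).
lra.
Qed.
End second_moment_expansion.

Lemma bounded_fun_norm_le (R : realType) (f : R -> R) :
  bounded_fun f -> exists M, forall y, `|f y| <= M.
Proof.
move=> [M [_]] /(_ (`|M| + 1)).
rewrite (le_lt_trans (ler_norm _)) ?ltrDl// => /(_ erefl) fM.
by exists (`|M| + 1) => y; exact: fM.
Qed.

Theorem lemma2p2 (R : realType) (f1 f2 : R -> R) :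
  measurable_fun setT f1 -> measurable_fun setT f2 ->
  bounded_fun f1 -> bounded_fun f2 ->
  exists C : R,
    forall (gam lam Del : R) (nu : {measure set R -> \bar R}),
      0 < lam -> 0 < Del -> nu setT = lam%:E -> lam * Del <= 1 ->
      let LHS := P_int gam lam Del nu
                   (fun x => fconv f1 (Ginv_int gam lam Del nu) x *
                             fconv f2 (Ginv_int gam lam Del nu) x) in
      `| LHS - (f1 0 * f2 0
                + Del * (\int[nu]_x (f1 x * f2 x)
                         - f1 0 * fconv f2 (convpow_bar nu 1) 0
                         - f2 0 * fconv f1 (convpow_bar nu 1) 0
                         + lam * f1 0 * f2 0)) | <= C * (lam * Del) ^+ 2
      /\ (f1 0 = 0 -> f2 0 = 0 ->
          `| LHS - lam * Del * (lam^-1 * \int[nu]_x (f1 x * f2 x)) |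
             <= C * (lam * Del) ^+ 2).
Proof.
move=> mf1 mf2 /bounded_fun_norm_le[M1 f1M] /bounded_fun_norm_le[M2 f2M].
pose E : R := expR 1.
exists ((3 * E ^+ 4 + 3 * E ^+ 3 + 5 * E) * M1 * M2).
move=> gam lam Del nu lam_gt0 Del_gt0 nuT x_le1 LHS.
have := P_int_fconv_Ginv_int_expansion_le gam nuT (ltW Del_gt0) x_le1 mf1 mf2 f1M f2M.
set e := expR (lam * Del) => expansion_le.
have e_le : (3 * e ^+ 4 + 3 * e ^+ 3 + 5 * e) * M1 * M2 * (lam * Del) ^+ 2
    <= (3 * E ^+ 4 + 3 * E ^+ 3 + 5 * E) * M1 * M2 * (lam * Del) ^+ 2.
  have eE : e <= E by rewrite ler_expR.
  have [e0 M10 M20] : [/\ 0 <= e, 0 <= M1 & 0 <= M2].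
    by split; [exact: expR_ge0 | exact: le_trans (normr_ge0 _) (f1M 0) |
               exact: le_trans (normr_ge0 _) (f2M 0)].
  have eXE n : e ^+ n <= E ^+ n by rewrite lerXn2r ?nnegrE// (le_trans e0).
  apply: ler_wpM2r; first by rewrite exprn_ge0// mulr_ge0// ltW.
  do 2 apply: ler_wpM2r => //.
  by have := eXE 3; have := eXE 4; lra.
have convpow_bar1 f : fconv f (convpow_bar nu 1) 0 = \int[nu]_y f y.
  by apply: eq_Rintegral => y _ /=; rewrite addr0 sub0r opprK.
split; first by rewrite !convpow_bar1; exact: le_trans e_le.
move=> f10 f20; apply: le_trans e_le; congr (`|LHS - _| <= _): expansion_le.
by rewrite f10 f20; field; exact: lt0r_neq0.
Qed.
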